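(* Let $\underline M=(M,\lambda,\mu)$ be a free metabolic extended quadratic form over an abelian group $Q$ and $L\le M$ a lagrangian. Then there is an isomorphism $J:\underline M\to-\underline M$ with $J|_L=\mathrm{id}_L$.
   Context: Extended quadratic form over $Q$: $(M,\lambda,\mu)$, $\lambda$ symmetric bilinear to $\mathbb Z$, $\mu:M\to Q$ homomorphism; isomorphisms preserve $\lambda$ and $\mu$. $-\underline M=(M,-\lambda,-\mu)$. Free: $M$ free. Metabolic: $\mathrm{ad}\lambda:M\to\mathrm{Hom}(M,\mathbb Z)$ is an isomorphism (free case) and there is a lagrangian, i.e. a direct summand $L$ of half rank with $\lambda|_{L\times L}=0$ and $\mu|_L=0$. *)

(* A free (finitely generated) abelian group M of rank n is
   modelled as the Z-module 'rV[int]_n. *)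
From HB Require Import structures.
From mathcomp Require Import all_boot all_order all_algebra.
Set Implicit Arguments. Unset Strict Implicit. Unset Printing Implicit Defensive.
Import Order.TTheory GRing.Theory Num.Theory.
Local Open Scope ring_scope.

Notation FreeM n := 'rV[int]_n.

Definition is_hom (A B : zmodType) (f : A -> B) : Prop :=
  forall x y, f (x + y) = f x + f y.

Definition sym_bilinear n (lam : FreeM n -> FreeM n -> int) : Prop :=
  (forall x y, lam x y = lam y x) /\
  (forall x y z, lam (x + y) z = lam x z + lam y z).

Definition ext_quad_form (Q : zmodType) n
  (lam : FreeM n -> FreeM n -> int) (mu : FreeM n -> Q) : Prop :=
  sym_bilinear lam /\ is_hom mu.

(* ad lam : M -> Hom(M, Z) is an isomorphism: every homomorphism M -> Z
   is lam x (.) for exactly one x *)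
Definition ad_iso n (lam : FreeM n -> FreeM n -> int) : Prop :=
  forall f : FreeM n -> int, is_hom f ->
    exists x, (forall y, lam x y = f y) /\
      forall x', (forall y, lam x' y = f y) -> x' = x.

Definition subgroup n (L : FreeM n -> Prop) : Prop :=
  L 0 /\ forall x y, L x -> L y -> L (x - y).

Definition direct_summand n (L : FreeM n -> Prop) : Prop :=
  subgroup L /\
  exists K : FreeM n -> Prop, subgroup K /\
    (forall x, L x -> K x -> x = 0) /\
    (forall x, exists l k, L l /\ K k /\ x = l + k).

Definition has_rank n (L : FreeM n -> Prop) (k : nat) : Prop :=
  exists f : FreeM k -> FreeM n, is_hom f /\ injective f /\
    forall x, L x <-> exists y, x = f y.

Definition lagrangian (Q : zmodType) n
  (lam : FreeM n -> FreeM n -> int) (mu : FreeM n -> Q)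
  (L : FreeM n -> Prop) : Prop :=
  direct_summand L /\ (exists k, has_rank L k /\ (2 * k)%N = n) /\
  (forall x y, L x -> L y -> lam x y = 0) /\
  (forall x, L x -> mu x = 0).

Definition metabolic (Q : zmodType) n
  (lam : FreeM n -> FreeM n -> int) (mu : FreeM n -> Q) : Prop :=
  ad_iso lam /\ exists L, lagrangian lam mu L.

Definition iso_to_neg (Q : zmodType) n
  (lam : FreeM n -> FreeM n -> int) (mu : FreeM n -> Q)
  (J : FreeM n -> FreeM n) : Prop :=
  is_hom J /\ bijective J /\
  (forall x y, lam (J x) (J y) = - lam x y) /\
  (forall x, mu (J x) = - mu x).

From mathcomp Require Import all_boot all_order all_algebra.
From Stdlib Require Import ClassicalEpsilon.
From mathcomp Require Import ring.
Set Implicit Arguments. Unset Strict Implicit. Unset Printing Implicit Defensive.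
Import Order.TTheory GRing.Theory Num.Theory.
Local Open Scope ring_scope.

(* Choose a complement K of L, so that M = L (+) K, and let pK be the
   projection onto K.  By unimodularity pK has an adjoint A, with
   lam (A u) y = lam u (pK y).  A lagrangian of a unimodular form is its own
   orthogonal (a rank count over Q, then saturation of the direct summand L),
   so A takes values in L.  Then J (l + k) := l - k + A k fixes L, is an
   involution and negates mu; it negates lam because the cross terms
   lam (A k) k' = lam k k' compensate the change of sign of lam k k'. *)

Section Homomorphisms.
Variables (A B : zmodType) (g : A -> B).
Hypothesis hom_g : is_hom g.

Lemma hom0 : g 0 = 0.
Proof. by apply: (addrI (g 0)); rewrite -hom_g !addr0. Qed.

Lemma homN x : g (- x) = - g x.
Proof. by apply/eqP; rewrite -subr_eq0 opprK -hom_g addNr hom0. Qed.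

Lemma homMn x m : g (x *+ m) = g x *+ m.
Proof. by elim: m => [|m IHm]; rewrite ?mulr0n ?hom0 // !mulrS hom_g IHm. Qed.

Lemma homMz x (z : int) : g (x *~ z) = g x *~ z.
Proof. by case: z => m; rewrite ?NegzE ?mulrNz ?homN -!pmulrn homMn. Qed.

End Homomorphisms.

Lemma hom_comp (A B C : zmodType) (g : B -> C) (h : A -> B) :
  is_hom g -> is_hom h -> is_hom (g \o h).
Proof. by move=> hom_g hom_h x y; rewrite /= hom_h hom_g. Qed.

Lemma hom_sumz n (g : 'rV[int]_n -> int) : is_hom g ->
  forall x, g x = \sum_j x 0 j * g (delta_mx 0 j).
Proof.
move=> hom_g x; rewrite {1}(matrix_sum_delta x) big_ord1.
rewrite (big_morph g hom_g (hom0 hom_g)); apply: eq_bigr => j _.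
by rewrite -{1}(intz (x 0 j)) scaler_int homMz // ord1 -mulrzr intz mulrC.
Qed.

Lemma hom_mx n m (f : 'rV[int]_n -> 'rV[int]_m) : is_hom f ->
  forall x, f x = x *m \matrix_(j < n) f (delta_mx 0 j).
Proof.
move=> hom_f x; apply/rowP => c; rewrite !mxE.
have hom_fc : is_hom (fun y => f y 0 c) by move=> y z; rewrite hom_f mxE.
by rewrite (hom_sumz hom_fc x); apply: eq_bigr => j _; rewrite !mxE.
Qed.

Lemma map_intr_inj m k : injective (@map_mx int rat intr m k).
Proof.
by move=> A B /matrixP eqAB; apply/matrixP => i j; have := eqAB i j; rewrite !mxE => /intr_inj.
Qed.

Lemma rat_row_clear_den m (q : 'rV[rat]_m) :
  exists2 d : int, d != 0 & exists p : 'rV[int]_m, map_mx intr p = d%:~R *: q.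
Proof.
exists (\prod_j denq (q 0 j)); first by apply/prodf_neq0 => j _; rewrite denq_neq0.
exists (\row_j ((\prod_(i | i != j) denq (q 0 i)) * numq (q 0 j))).
apply/rowP => j; rewrite !mxE [X in _ = X%:~R * _](bigD1 j) //= !intrM numqE.
ring.
Qed.

Lemma submx_intr_clear_den k n (a : 'rV[int]_n) (F : 'M[int]_(k, n)) :
  (map_mx intr a <= map_mx (intr : int -> rat) F)%MS ->
  exists2 d : int, d != 0 & exists p, d *: a = p *m F.
Proof.
case/submxP => q def_a; have [d nz_d [p def_p]] := rat_row_clear_den q.
exists d => //; exists p; apply: map_intr_inj.
by rewrite map_mxM def_p -scalemxAl -def_a map_mxZ.
Qed.

Lemma row_free_map_intr k n (F : 'M[int]_(k, n)) :
  (forall p : 'rV[int]_k, p *m F = 0 -> p = 0) ->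
  row_free (map_mx (intr : int -> rat) F).
Proof.
move=> injF; rewrite -kermx_eq0; apply/eqP/row_matrixP => r; rewrite row0.
set q := row r _; have qF0 : q *m map_mx intr F = 0 by rewrite -row_mul mulmx_ker row0.
have [d nz_d [p def_p]] := rat_row_clear_den q.
have /injF p0 : p *m F = 0.
  by apply: map_intr_inj; rewrite map_mxM def_p -scalemxAl qF0 scaler0 map_mx0.
move: def_p; rewrite p0 map_mx0 => /esym/eqP.
by rewrite scaler_eq0 intr_eq0 (negbTE nz_d) => /eqP.
Qed.

Lemma kermx_sub_of_rank (F : fieldType) m n k (A : 'M[F]_(n, k)) (B : 'M_(m, n)) :
  row_full A -> row_free B -> B *m A = 0 -> (m + k = n)%N -> (kermx A <= B)%MS.
Proof.
move=> /eqP rkA /eqP rkB BA0 mkn.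
have sBkerA : (B <= kermx A)%MS by apply/sub_kermxP.
by rewrite -(mxrank_leqif_sup sBkerA).2 mxrank_ker rkA rkB -mkn addnK.
Qed.

Section Subgroups.
Variables (n : nat) (K : 'rV[int]_n -> Prop).
Hypothesis subK : subgroup K.

Lemma subg_add x y : K x -> K y -> K (x + y).
Proof.
by case: subK => K0 KB Kx Ky; have := KB x (0 - y) Kx (KB _ _ K0 Ky); rewrite sub0r opprK.
Qed.

Lemma subg_opp x : K x -> K (- x).
Proof. by case: subK => K0 KB Kx; have := KB _ _ K0 Kx; rewrite sub0r. Qed.

Lemma subg_scale (d : int) x : K x -> K (d *: x).
Proof.
move=> Kx; rewrite -[d]intz scaler_int.
have Kxn m : K (x *+ m).
  by elim: m => [|m IHm]; [rewrite mulr0n; case: subK | rewrite mulrS; apply: subg_add].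
by case: d => m; rewrite ?NegzE ?mulrNz -pmulrn //; apply: subg_opp.
Qed.

End Subgroups.

Section DirectSum.
Variables (n : nat) (L K : 'rV[int]_n -> Prop).
Hypotheses (subL : subgroup L) (subK : subgroup K).
Hypothesis LK0 : forall x, L x -> K x -> x = 0.
Hypothesis LKspan : forall x, exists l k, L l /\ K k /\ x = l + k.

Lemma exists_projL x : exists l, L l /\ K (x - l).
Proof. by have [l [k [Ll [Kk ->]]]] := LKspan x; exists l; rewrite addrC addKr. Qed.

Definition projL x := proj1_sig (constructive_indefinite_description _ (exists_projL x)).
Definition projK x := x - projL x.

Lemma projL_in x : L (projL x).
Proof. by rewrite /projL; case: constructive_indefinite_description => ? []. Qed.

Lemma projK_in x : K (projK x).
Proof. by rewrite /projK /projL; case: constructive_indefinite_description => ? []. Qed.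

Lemma projL_sum l k : L l -> K k -> projL (l + k) = l.
Proof.
move=> Ll Kk; apply/eqP; rewrite -subr_eq0; apply/eqP/LK0.
  by case: subL => _; apply; [apply: projL_in |].
suff -> : projL (l + k) - l = - (projK (l + k) - k).
  exact: (subg_opp subK (subg_add subK (projK_in _) (subg_opp subK Kk))).
by rewrite /projK addrAC addrK opprB.
Qed.

Lemma projK_sum l k : L l -> K k -> projK (l + k) = k.
Proof. by move=> Ll Kk; rewrite /projK projL_sum // addrC addKr. Qed.

Lemma projK_L l : L l -> projK l = 0.
Proof. by move=> Ll; rewrite -[l]addr0 projK_sum //; case: subK. Qed.

Lemma projK_K k : K k -> projK k = k.
Proof. by move=> Kk; rewrite -{1}[k]add0r projK_sum //; case: subL. Qed.

Lemma projLK x : projL x + projK x = x.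
Proof. by rewrite addrC subrK. Qed.

Lemma projL_hom : is_hom projL.
Proof.
move=> x y; rewrite -{1}(projLK x) -{1}(projLK y) addrACA projL_sum //.
  by apply: (subg_add subL); apply: projL_in.
by apply: (subg_add subK); apply: projK_in.
Qed.

Lemma projK_hom : is_hom projK.
Proof. by move=> x y; rewrite /projK projL_hom opprD addrACA. Qed.

Lemma summand_saturated (d : int) a : d != 0 -> L (d *: a) -> L a.
Proof.
move=> nz_d Lda; have [l [k [Ll [Kk def_a]]]] := LKspan a.
have /LK0 dk0 : L (d *: k).
  have := subg_add subL Lda (subg_opp subL (subg_scale subL d Ll)).
  by rewrite def_a scalerDr addrAC subrr add0r.
suff k0 : k = 0 by rewrite def_a k0 addr0.
apply/rowP => j; have /rowP/(_ j)/eqP := dk0 (subg_scale subK d Kk).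
by rewrite !mxE mulf_eq0 (negbTE nz_d) => /eqP.
Qed.

Lemma summand_left_inverse k (f : 'rV[int]_k -> 'rV[int]_n) :
  is_hom f -> injective f -> (forall x, L x <-> exists y, x = f y) ->
  exists2 c, is_hom c & forall y, c (f y) = y.
Proof.
move=> hom_f inj_f imf.
have ex_c x : exists y, projL x = f y by apply/(imf _).1/projL_in.
pose c x := proj1_sig (constructive_indefinite_description _ (ex_c x)).
have cE x : f (c x) = projL x.
  by rewrite /c; case: constructive_indefinite_description.
exists c => [x y | y]; apply: inj_f; rewrite ?hom_f !cE ?projL_hom //.
rewrite -{1}[f y]addr0 projL_sum //; first by apply/imf; exists y.
by case: subK.
Qed.

End DirectSum.

Section Unimodular.
Variables (n : nat) (lam : 'rV[int]_n -> 'rV[int]_n -> int).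
Hypotheses (sym_lam : sym_bilinear lam) (uni_lam : ad_iso lam).

Lemma lam_homl y : is_hom (lam^~ y).
Proof. by move=> x z; case: sym_lam => _; apply. Qed.

Lemma lam_homr x : is_hom (lam x).
Proof. by case: sym_lam => lamC lamD y z; rewrite !(lamC x) lamD. Qed.

Lemma ad_iso_adjoint (h : 'rV[int]_n -> 'rV[int]_n) : is_hom h ->
  exists2 h' : 'rV[int]_n -> 'rV[int]_n,
    is_hom h' & forall u y, lam (h' u) y = lam u (h y).
Proof.
move=> hom_h; have ex_h' u := uni_lam (hom_comp (lam_homr u) hom_h).
pose h' u := proj1_sig (constructive_indefinite_description _ (ex_h' u)).
have h'E u : (forall y, lam (h' u) y = lam u (h y)) /\
    forall x, (forall y, lam x y = lam u (h y)) -> x = h' u.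
  by rewrite /h'; case: constructive_indefinite_description.
exists h' => [u v | u y]; last exact: (h'E u).1.
by symmetry; apply: (h'E _).2 => y; rewrite lam_homl !(h'E _).1 lam_homl.
Qed.

Section Lagrangian.
Variables (L K : 'rV[int]_n -> Prop) (k : nat) (f : 'rV[int]_k -> 'rV[int]_n).
Hypotheses (subL : subgroup L) (subK : subgroup K).
Hypothesis LK0 : forall x, L x -> K x -> x = 0.
Hypothesis LKspan : forall x, exists l k, L l /\ K k /\ x = l + k.
Hypotheses (hom_f : is_hom f) (inj_f : injective f).
Hypothesis imf : forall x, L x <-> exists y, x = f y.
Hypothesis isotropic_L : forall x y, L x -> L y -> lam x y = 0.
Hypothesis rank_half : (2 * k)%N = n.

Lemma lagrangian_dual_basis i :
  exists x, forall j, lam x (f (delta_mx 0 j)) = (i == j)%:R.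
Proof.
have [c hom_c cK] := summand_left_inverse subL subK LK0 LKspan hom_f inj_f imf.
have hom_ci : is_hom (fun y => c y 0 i) by move=> y z; rewrite hom_c mxE.
have [x [xE _]] := uni_lam hom_ci.
by exists x => j; rewrite xE cK mxE eqxx.
Qed.

(* The pairing matrix P represents x |-> (lam x (f e_i))_i; it has full
   rank k, so its rational kernel has rank n - k = k and is spanned by L. *)
Lemma lagrangian_perp a : (forall l, L l -> lam a l = 0) -> L a.
Proof.
move=> perp_a; pose F := \matrix_(j < k) f (delta_mx 0 j).
pose P : 'M[rat]_(n, k) := \matrix_(j, i) (lam (delta_mx 0 j) (f (delta_mx 0 i)))%:~R.
have PE x : map_mx intr x *m P = map_mx intr (\row_i lam x (f (delta_mx 0 i))).
  apply/rowP => i; rewrite !mxE (hom_sumz (lam_homl _) x) rmorph_sum.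
  by apply: eq_bigr => j _; rewrite !mxE rmorphM.
have fullP : row_full P.
  rewrite -sub1mx; apply/row_subP => i; rewrite row1.
  have [x xE] := lagrangian_dual_basis i.
  suff -> : delta_mx 0 i = map_mx intr x *m P by apply: submxMl.
  by rewrite PE; apply/rowP => j; rewrite !mxE xE eq_sym; case: (i == j).
have freeF : row_free (map_mx (intr : int -> rat) F).
  apply: row_free_map_intr => p pF0; apply: inj_f.
  by rewrite (hom_mx hom_f) pF0 (hom_mx hom_f 0) mul0mx.
have FP0 : map_mx intr F *m P = 0.
  apply/row_matrixP => r; rewrite row_mul row0.
  have -> : row r (map_mx intr F) = map_mx (intr : int -> rat) (f (delta_mx 0 r)).
    by apply/rowP => c; rewrite !mxE.
  by rewrite PE; apply/rowP => i; rewrite !mxE isotropic_L //; apply/imf; eexists.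
have /submx_intr_clear_den [d nz_d [p dap]] :
    (map_mx intr a <= map_mx (intr : int -> rat) F)%MS.
  apply: submx_trans (kermx_sub_of_rank fullP freeF FP0 _); last by rewrite addnn -mul2n.
  by apply/sub_kermxP; rewrite PE; apply/rowP => i; rewrite !mxE perp_a //; apply/imf; eexists.
apply: (summand_saturated subL subK LK0 LKspan nz_d).
by apply/imf; exists p; rewrite dap (hom_mx hom_f).
Qed.

End Lagrangian.
End Unimodular.

Section Reflection.
Variables (Q : zmodType) (n : nat).
Variables (lam : 'rV[int]_n -> 'rV[int]_n -> int) (mu : 'rV[int]_n -> Q).
Variables (L K : 'rV[int]_n -> Prop) (A J : 'rV[int]_n -> 'rV[int]_n).
Hypotheses (sym_lam : sym_bilinear lam) (hom_mu : is_hom mu).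
Hypotheses (subL : subgroup L) (subK : subgroup K).
Hypothesis LKspan : forall x, exists l k, L l /\ K k /\ x = l + k.
Hypothesis isotropic_L : forall x y, L x -> L y -> lam x y = 0.
Hypothesis muL : forall x, L x -> mu x = 0.
Hypothesis hom_A : is_hom A.
Hypothesis AL : forall k, L (A k).
Hypothesis lamAK : forall k k', K k -> K k' -> lam (A k) k' = lam k k'.
Hypothesis JE : forall l k, L l -> K k -> J (l + k) = l - k + A k.

Lemma reflection_id l : L l -> J l = l.
Proof. by move=> Ll; rewrite -{1}[l]addr0 JE ?subr0 ?(hom0 hom_A) ?addr0 //; case: subK. Qed.

Lemma reflection_involutive : involutive J.
Proof.
move=> x; have [l [k [Ll [Kk ->]]]] := LKspan x.
rewrite JE // addrAC JE ?opprK ?(homN hom_A).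
- by rewrite addrAC addrK.
- exact: (subg_add subL Ll (AL k)).
- exact: (subg_opp subK Kk).
Qed.

Lemma reflection_hom : is_hom J.
Proof.
move=> x y; have [l [k [Ll [Kk ->]]]] := LKspan x.
have [l' [k' [Ll' [Kk' ->]]]] := LKspan y.
rewrite addrACA !JE // ?hom_A.
- by rewrite opprD [X in X + _]addrACA (addrACA (l - k) (l' - k')).
- exact: (subg_add subL Ll Ll').
- exact: (subg_add subK Kk Kk').
Qed.

Lemma reflection_lam x y : lam (J x) (J y) = - lam x y.
Proof.
have [l [k [Ll [Kk ->]]]] := LKspan x; have [l' [k' [Ll' [Kk' ->]]]] := LKspan y.
have lamD := lam_homl sym_lam; have lamDr := lam_homr sym_lam.
have lamNl z := homN (lam_homl sym_lam z); have lamNr z := homN (lam_homr sym_lam z).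
have lamAK' : lam k (A k') = lam k k' by case: sym_lam => lamC _; rewrite lamC lamAK // lamC.
rewrite !JE // !(lamD, lamDr, lamNl, lamNr) (lamAK Kk Kk') lamAK'.
rewrite (isotropic_L Ll Ll') (isotropic_L Ll (AL k')) (isotropic_L (AL k) Ll').
by rewrite (isotropic_L (AL k) (AL k')); ring.
Qed.

Lemma reflection_mu x : mu (J x) = - mu x.
Proof.
have [l [k [Ll [Kk ->]]]] := LKspan x.
by rewrite JE // !hom_mu (homN hom_mu) (muL Ll) (muL (AL k)) !add0r addr0.
Qed.

Lemma reflection_iso_to_neg : iso_to_neg lam mu J.
Proof.
split; first exact: reflection_hom.
split; first by exists J; apply: reflection_involutive.
by split; [apply: reflection_lam | apply: reflection_mu].
Qed.

End Reflection.

Theorem mainTheorem9 (Q : zmodType) (n : nat)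
  (lam : 'rV[int]_n -> 'rV[int]_n -> int) (mu : 'rV[int]_n -> Q)
  (L : 'rV[int]_n -> Prop) :
  ext_quad_form lam mu -> metabolic lam mu -> lagrangian lam mu L ->
  exists J : 'rV[int]_n -> 'rV[int]_n,
    iso_to_neg lam mu J /\ (forall x, L x -> J x = x).
Proof.
move=> [sym_lam hom_mu] [uni_lam _]
  [[subL [K [subK [LK0 LKspan]]]]
   [[k [[f [hom_f [inj_f imf]]] rank_half]] [isotropic_L muL]]].
have [A hom_A lamA] := ad_iso_adjoint sym_lam uni_lam (projK_hom subL subK LK0 LKspan).
have AL u : L (A u).
  apply: (lagrangian_perp sym_lam uni_lam subL subK LK0 LKspan
            hom_f inj_f imf isotropic_L rank_half).
  by move=> l Ll; rewrite lamA (projK_L subL subK LK0) // (hom0 (lam_homr sym_lam u)).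
have lamAK u v : K u -> K v -> lam (A u) v = lam u v.
  by move=> _ Kv; rewrite lamA (projK_K subL subK LK0).
pose J : 'rV[int]_n -> 'rV[int]_n :=
  fun x => projL LKspan x - projK LKspan x + A (projK LKspan x).
have JE l v : L l -> K v -> J (l + v) = l - v + A v.
  by move=> Ll Kv; rewrite /J (projL_sum subL subK LK0) // (projK_sum subL subK LK0).
exists J; split; last exact: reflection_id subK hom_A JE.
exact: reflection_iso_to_neg sym_lam hom_mu subL subK LKspan isotropic_L muL hom_A AL lamAK JE.
Qed.
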